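(* The probabilistic function $\mathit{I2P}:\mathbb{N}\to\mathcal D(\mathbb{N})$ defined below belongs to $\mathscr{PR}$.
   Context: Fix a computable bijection $\mathit{pair}:\mathbb{N}\times\mathbb{N}\to\mathbb{N}$ with computable inverse; a natural $n=\mathit{pair}(a,b)$ with $b>0$ represents the rational $a/b$. $\mathit{I2P}(n)(1)=q$ and $\mathit{I2P}(n)(0)=1-q$ if $n$ represents a rational $q$ with $0\le q\le 1$, and $\mathit{I2P}(n)(y)=0$ in all other cases. $\mathcal D(X)$ is the set of $\mathcal D:X\to[0,1]$ with $\sum_x\mathcal D(x)\le1$; a PF is a function $\mathbb{N}^k\to\mathcal D(\mathbb{N})$. Basic PFs: $z(n)(0)=1$; $s(n)(n+1)=1$; $\Pi^n_m(k_1,\dots,k_n)(k_m)=1$; $r(x)(x)=r(x)(x+1)=1/2$ (other values $0$). Generalized composition $(f\odot(g_1,\dots,g_n))(\vec x)(y)=\sum_{z_1,\dots,z_n} f(z_1,\dots,z_n)(y)\prod_i g_i(\vec x)(z_i)$; primitive recursion $h=\mathrm{rec}(f,g)$: $h(\vec x,0)=f(\vec x)$, $h(\vec x,y+1)(w)=\sum_z h(\vec x,y)(z)\, g(\vec x,y,z)(w)$; minimization $\mu f(\vec x)(y)=f(\vec x,y)(0)\prod_{z<y}\sum_{k>0}f(\vec x,z)(k)$. $\mathscr{PR}$ is the smallest class of PFs containing the basic PFs and closed under these three operations. *)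

From Stdlib Require Import Reals Arith ClassicalEpsilon.
From Stdlib Require Vector Fin.
Open Scope R_scope.

(* ssum a = the sum of the series sum_{n>=0} a n (chosen by epsilon among
   the limits of the partial sums; all series occurring below are series of
   nonnegative terms bounded by 1, hence convergent). *)
Definition ssum (a : nat -> R) : R :=
  epsilon (inhabits 0%R) (fun l => infinite_sum a l).

Fixpoint sumvec (n : nat) : (Vector.t nat n -> R) -> R :=
  match n with
  | O => fun F => F (Vector.nil nat)
  | S m => fun F => ssum (fun z => sumvec m (fun zs => F (Vector.cons nat z m zs)))
  end.

Fixpoint prodfin (n : nat) : (Fin.t n -> R) -> R :=
  match n with
  | O => fun _ => 1
  | S m => fun a => a Fin.F1 * prodfin m (fun i => a (Fin.FS i))
  end.

Fixpoint prodlt (y : nat) (a : nat -> R) : R :=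
  match y with
  | O => 1
  | S y' => prodlt y' a * a y'
  end.

(* A k-ary PF maps nat^k to a function D : nat -> R (intended D(nat)). *)
Definition PF (k : nat) := Vector.t nat k -> nat -> R.

Definition onearg (v : Vector.t nat 1) : nat := Vector.hd v.

Definition zero_pf : PF 1 := fun _ y => if Nat.eqb y 0 then 1 else 0.
Definition succ_pf : PF 1 := fun v y => if Nat.eqb y (S (onearg v)) then 1 else 0.
Definition proj_pf (n : nat) (m : Fin.t n) : PF n :=
  fun v y => if Nat.eqb y (Vector.nth v m) then 1 else 0.
Definition rand_pf : PF 1 :=
  fun v y => if Nat.eqb y (onearg v) then 1/2
             else if Nat.eqb y (S (onearg v)) then 1/2 else 0.

Definition comp_pf (n k : nat) (f : PF n) (gs : Fin.t n -> PF k) : PF k :=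
  fun x y => sumvec n (fun z => f z y * prodfin n (fun i => gs i x (Vector.nth z i))).

(* primitive recursion h = rec(f,g), with h(x,y) = h (append x [y]) *)
Fixpoint rec_aux (k : nat) (f : PF k) (g : PF (k + 2)) (x : Vector.t nat k)
    (y : nat) : nat -> R :=
  match y with
  | O => f x
  | S y' => fun w => ssum (fun z =>
       rec_aux k f g x y' z * g (Vector.append x (Vector.cons nat y' 1 (Vector.cons nat z 0 (Vector.nil nat)))) w)
  end.

Definition rec_pf (k : nat) (f : PF k) (g : PF (k + 2)) : PF (k + 1) :=
  fun v => let p := Vector.splitat k v in rec_aux k f g (fst p) (Vector.hd (snd p)).

Definition snoc1 (k : nat) (x : Vector.t nat k) (y : nat) : Vector.t nat (k + 1) :=
  Vector.append x (Vector.cons nat y 0 (Vector.nil nat)).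

Definition mu_pf (k : nat) (f : PF (k + 1)) : PF k :=
  fun x y => f (snoc1 k x y) 0%nat *
             prodlt y (fun z => ssum (fun j => f (snoc1 k x z) (S j))).

Inductive PR : forall k : nat, PF k -> Prop :=
| PR_zero : PR 1 zero_pf
| PR_succ : PR 1 succ_pf
| PR_proj : forall (n : nat) (m : Fin.t n), PR n (proj_pf n m)
| PR_rand : PR 1 rand_pf
| PR_comp : forall (n k : nat) (f : PF n) (gs : Fin.t n -> PF k),
    PR n f -> (forall i, PR k (gs i)) -> PR k (comp_pf n k f gs)
| PR_rec : forall (k : nat) (f : PF k) (g : PF (k + 2)),
    PR k f -> PR (k + 2) g -> PR (k + 1) (rec_pf k f g)
| PR_mu : forall (k : nat) (f : PF (k + 1)), PR (k + 1) f -> PR k (mu_pf k f).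

Definition pair (a b : nat) : nat := ((a + b) * (a + b + 1)) / 2 + b.

(* its inverse: enumerate N x N along diagonals *)
Definition pair_succ (p : nat * nat) : nat * nat :=
  match p with
  | (O, b) => (S b, O)
  | (S a, b) => (a, S b)
  end.
Definition unpair (n : nat) : nat * nat := Nat.iter n pair_succ (0%nat, 0%nat).

Definition I2P : PF 1 :=
  fun v y =>
    let (a, b) := unpair (onearg v) in
    if Nat.ltb 0 b then
      let q := INR a / INR b in
      if Rle_dec 0 q then
        if Rle_dec q 1 then
          (if Nat.eqb y 1 then q else if Nat.eqb y 0 then 1 - q else 0)
        else 0
      else 0
    else 0.

From Stdlib Require Import Reals Lra Lia ClassicalEpsilon FunctionalExtensionality.
From Stdlib Require Vector Fin.
Import Vector.VectorNotations.
Open Scope R_scope.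

(* A deterministic function h embeds as the PF x |-> dirac (h x), and the embeddings of the
   primitive recursive functions lie in PR (the constant 0 of arity 0 is obtained by minimizing
   the zero PF).  On an input n = pair a b with 0 <= a/b <= 1, draw Y with probability 2^-(Y+1)
   by minimizing the fair coin r(0), and output the (Y+1)-th binary digit d_Y of a/b, computed by
   long division and selected deterministically by a minimization.  The output is 1 with
   probability sum_Y d_Y 2^-(Y+1) = a/b.  On any other input the minimized test never vanishes,
   so the output is the zero distribution, as I2P prescribes. *)

Lemma ssum_unique a l : infinite_sum a l -> ssum a = l.
Proof.
  intro Hl. apply (uniqueness_sum a); [|exact Hl].
  unfold ssum. apply epsilon_spec. exists l; exact Hl.
Qed.

Lemma sum_f_R0_single (a : nat -> R) k :
  (forall j, j <> k -> a j = 0) ->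
  forall n, sum_f_R0 a n = if Nat.leb k n then a k else 0.
Proof.
  intros Ha n. induction n as [|n IH]; simpl.
  - destruct k; [reflexivity | apply Ha; lia].
  - rewrite IH. destruct (Nat.leb_spec k n), (Nat.leb_spec k (S n)); try lia.
    + rewrite (Ha (S n)) by lia. ring.
    + replace k with (S n) by lia. ring.
    + rewrite (Ha (S n)) by lia. ring.
Qed.

Lemma ssum_single (a : nat -> R) k : (forall j, j <> k -> a j = 0) -> ssum a = a k.
Proof.
  intro Ha. apply ssum_unique. intros eps Heps. exists k. intros n Hn.
  rewrite (sum_f_R0_single a k Ha n), (proj2 (Nat.leb_le k n)) by lia.
  unfold R_dist. rewrite Rminus_diag, Rabs_R0. exact Heps.
Qed.

Lemma ssum_0 (a : nat -> R) : (forall j, a j = 0) -> ssum a = 0.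
Proof. intro Ha. rewrite (ssum_single a 0); auto. Qed.

Lemma sumvec_0 n F : (forall z, F z = 0) -> sumvec n F = 0.
Proof.
  revert F; induction n as [|n IH]; intros F HF; simpl; [apply HF|].
  apply ssum_0. intro j. apply IH. intro z. apply HF.
Qed.

Lemma prodlt_1 y a : (forall z, (z < y)%nat -> a z = 1) -> prodlt y a = 1.
Proof.
  induction y as [|y IH]; intro Ha; simpl; [reflexivity|].
  rewrite IH, (Ha y) by (lia || intros; apply Ha; lia). ring.
Qed.

Lemma prodlt_0 y a z : (z < y)%nat -> a z = 0 -> prodlt y a = 0.
Proof.
  induction y as [|y IH]; intros Hz Ha; simpl; [lia|].
  destruct (Nat.eq_dec z y) as [->|Hne]; [rewrite Ha | rewrite IH by (lia || auto)]; ring.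
Qed.

Lemma prodlt_const y c : prodlt y (fun _ => c) = c ^ y.
Proof. induction y as [|y IH]; simpl; [|rewrite IH]; ring. Qed.

Lemma infinite_sum_geometric_error (t : nat -> R) L (e : nat -> R) r :
  Rabs r < 1 -> (forall N, sum_f_R0 t N = L + e N) -> (forall N, Rabs (e N) <= Rabs (r ^ N)) ->
  infinite_sum t L.
Proof.
  intros Hr Hs He eps Heps.
  destruct (pow_lt_1_zero r Hr eps Heps) as [N HN].
  exists N. intros n Hn. unfold R_dist.
  rewrite Hs. replace (L + e n - L) with (e n) by ring.
  eapply Rle_lt_trans; [apply He | apply HN, Hn].
Qed.

Definition dirac (w : nat) : nat -> R := fun y => if Nat.eqb y w then 1 else 0.

Lemma dirac_neq w y : y <> w -> dirac w y = 0.
Proof. intro H. unfold dirac. rewrite (proj2 (Nat.eqb_neq y w) H). reflexivity. Qed.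

Lemma dirac_eq w : dirac w w = 1.
Proof. unfold dirac. rewrite Nat.eqb_refl. reflexivity. Qed.

Lemma ssum_dirac (a : nat -> R) w : ssum (fun j => dirac w j * a j) = a w.
Proof.
  rewrite (ssum_single _ w), dirac_eq; [ring|].
  intros j Hj. rewrite dirac_neq by exact Hj. ring.
Qed.

Definition det_pf (k : nat) (h : Vector.t nat k -> nat) : PF k := fun v => dirac (h v).

Definition PRfun (k : nat) (h : Vector.t nat k -> nat) : Prop := PR k (det_pf k h).

Lemma sumvec_dirac n (w : Vector.t nat n) (F : Vector.t nat n -> R) :
  sumvec n (fun z => F z * prodfin n (fun i => dirac w[@i] z[@i])) = F w.
Proof.
  induction w as [|h m t IH] in F |- *; simpl; [ring|].
  rewrite (ssum_single _ h).
  - rewrite dirac_eq, <- (IH (fun zs => F (h :: zs))).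
    f_equal. extensionality zs. ring.
  - intros j Hj. apply sumvec_0. intro z. simpl. rewrite dirac_neq by exact Hj. ring.
Qed.

Lemma comp_det_pf n k f (gl : Vector.t (Vector.t nat k -> nat) n) :
  comp_pf n k f (fun i => det_pf k gl[@i]) = fun x => f (Vector.map (fun g => g x) gl).
Proof.
  extensionality x. extensionality y. unfold comp_pf, det_pf.
  rewrite <- (sumvec_dirac n (Vector.map (fun g => g x) gl) (fun z => f z y)).
  f_equal. extensionality z. do 3 f_equal. extensionality i.
  rewrite (Vector.nth_map _ _ i i eq_refl). reflexivity.
Qed.

Lemma PRfun_comp n k f (gl : Vector.t (Vector.t nat k -> nat) n) :
  PRfun n f -> Vector.Forall (PRfun k) gl ->
  PRfun k (fun x => f (Vector.map (fun g => g x) gl)).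
Proof.
  intros Hf Hgl. unfold PRfun.
  replace (det_pf k _) with (comp_pf n k (det_pf n f) (fun i => det_pf k gl[@i]))
    by (rewrite comp_det_pf; reflexivity).
  apply PR_comp; [exact Hf|]. exact (proj1 (Vector.Forall_nth _ _ _ gl) Hgl).
Qed.

Lemma snoc1_splitat k (v : Vector.t nat (k + 1)) :
  v = snoc1 k (fst (Vector.splitat k v)) (Vector.hd (snd (Vector.splitat k v))).
Proof.
  apply Vector.append_splitat. rewrite (surjective_pairing (Vector.splitat k v)). f_equal.
  set (w := snd (Vector.splitat k v)).
  rewrite (Vector.eta w). f_equal. apply Vector.case0 with (v := Vector.tl w). reflexivity.
Qed.

Lemma PRfun_rec k f g (h : Vector.t nat (k + 1) -> nat) :
  PRfun k f -> PRfun (k + 2) g ->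
  (forall x, h (snoc1 k x 0) = f x) ->
  (forall x y, h (snoc1 k x (S y)) = g (Vector.append x [y; h (snoc1 k x y)])) ->
  PRfun (k + 1) h.
Proof.
  intros Hf Hg H0 HS.
  assert (Hrec : forall x y,
             rec_aux k (det_pf k f) (det_pf (k + 2) g) x y = dirac (h (snoc1 k x y))).
  { intros x y. induction y as [|y IH]; simpl.
    - rewrite H0. reflexivity.
    - extensionality w. rewrite HS, IH, ssum_dirac. reflexivity. }
  unfold PRfun. replace (det_pf (k + 1) h) with (rec_pf k (det_pf k f) (det_pf (k + 2) g)).
  - apply PR_rec; assumption.
  - extensionality v. unfold rec_pf. simpl. rewrite Hrec, <- snoc1_splitat. reflexivity.
Qed.

Lemma ssum_dirac_succ w : ssum (fun j => dirac w (S j)) = if Nat.eqb w 0 then 0 else 1.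
Proof.
  destruct w as [|w]; simpl.
  - apply ssum_0. intro j. apply dirac_neq. lia.
  - rewrite (ssum_single _ w), dirac_eq; [reflexivity|].
    intros j Hj. apply dirac_neq. lia.
Qed.

Lemma mu_det_pf k f x y :
  mu_pf k (det_pf (k + 1) f) x y =
  dirac (f (snoc1 k x y)) 0 * prodlt y (fun z => if Nat.eqb (f (snoc1 k x z)) 0 then 0 else 1).
Proof.
  unfold mu_pf. f_equal. f_equal. extensionality z. apply ssum_dirac_succ.
Qed.

Lemma mu_det_pf_first_zero k f x d :
  f (snoc1 k x d) = 0%nat -> (forall z, (z < d)%nat -> f (snoc1 k x z) <> 0%nat) ->
  mu_pf k (det_pf (k + 1) f) x = dirac d.
Proof.
  intros Hd Hlt. extensionality y. rewrite mu_det_pf.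
  destruct (Nat.lt_total y d) as [Hy|[->|Hy]].
  - rewrite (dirac_neq _ 0), (dirac_neq d y) by (lia || (apply Hlt in Hy; lia)). ring.
  - rewrite Hd, !dirac_eq, prodlt_1; [ring|].
    intros z Hz. rewrite (proj2 (Nat.eqb_neq _ 0) (Hlt z Hz)). reflexivity.
  - rewrite (dirac_neq d y), (prodlt_0 y _ d) by (rewrite ?Hd; reflexivity || lia). ring.
Qed.

Lemma mu_det_pf_no_zero k f x :
  (forall z, f (snoc1 k x z) <> 0%nat) -> mu_pf k (det_pf (k + 1) f) x = fun _ => 0.
Proof.
  intros Hf. extensionality y. rewrite mu_det_pf, dirac_neq by (apply not_eq_sym, Hf). ring.
Qed.

Notation arg0 v := (Vector.nth v Fin.F1).
Notation arg1 v := (Vector.nth v (Fin.FS Fin.F1)).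
Notation arg2 v := (Vector.nth v (Fin.FS (Fin.FS Fin.F1))).
Notation arg3 v := (Vector.nth v (Fin.FS (Fin.FS (Fin.FS Fin.F1)))).

Ltac destruct_vec v :=
  simpl in v;
  match type of v with
  | Vector.t _ 0 => pattern v; apply Vector.case0; clear v
  | Vector.t _ (S _) =>
      let h := fresh "a" in let t := fresh "v" in
      pattern v; apply Vector.caseS'; clear v; intros h t; destruct_vec t
  end.

Section PrimitiveRecursiveFunctions.
Local Open Scope nat_scope.

Lemma PRfun_proj n (m : Fin.t n) : PRfun n (fun v => v[@m]).
Proof. exact (PR_proj n m). Qed.

Lemma PRfun_succ : PRfun 1 (fun v => S (arg0 v)).
Proof.
  unfold PRfun. replace (det_pf 1 _) with succ_pf; [exact PR_succ|].
  extensionality v. destruct_vec v. reflexivity.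
Qed.

Lemma PRfun_zero_nullary : PRfun 0 (fun _ => 0).
Proof.
  unfold PRfun. replace (det_pf 0 _) with (mu_pf 0 zero_pf) by
    (extensionality x; apply (mu_det_pf_first_zero 0 (fun _ => 0)); [reflexivity | lia]).
  apply PR_mu, PR_zero.
Qed.

Lemma PRfun_comp1 k op h :
  PRfun 1 (fun v => op (arg0 v)) -> PRfun k h -> PRfun k (fun x => op (h x)).
Proof. intros Hop Hh. apply (PRfun_comp 1 k _ [h] Hop). repeat constructor; assumption. Qed.

Lemma PRfun_comp2 k op h1 h2 :
  PRfun 2 (fun v => op (arg0 v) (arg1 v)) -> PRfun k h1 -> PRfun k h2 ->
  PRfun k (fun x => op (h1 x) (h2 x)).
Proof. intros Hop H1 H2. apply (PRfun_comp 2 k _ [h1; h2] Hop). repeat constructor; assumption. Qed.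

Lemma PRfun_comp3 k op h1 h2 h3 :
  PRfun 3 (fun v => op (arg0 v) (arg1 v) (arg2 v)) -> PRfun k h1 -> PRfun k h2 -> PRfun k h3 ->
  PRfun k (fun x => op (h1 x) (h2 x) (h3 x)).
Proof.
  intros Hop H1 H2 H3. apply (PRfun_comp 3 k _ [h1; h2; h3] Hop). repeat constructor; assumption.
Qed.

Lemma PRfun_S k h : PRfun k h -> PRfun k (fun x => S (h x)).
Proof. apply PRfun_comp1, PRfun_succ. Qed.

Lemma PRfun_const k c : PRfun k (fun _ => c).
Proof.
  induction c as [|c IH].
  - exact (PRfun_comp 0 k (fun _ => 0) [] PRfun_zero_nullary (Vector.Forall_nil _)).
  - exact (PRfun_S k (fun _ => c) IH).
Qed.

Lemma PRfun_pred : PRfun 1 (fun v => Nat.pred (arg0 v)).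
Proof.
  apply (PRfun_rec 0 (fun _ => 0) (fun v => arg0 v)); [apply PRfun_const | apply PRfun_proj | ..];
    intros x; destruct_vec x; reflexivity.
Qed.

Lemma PRfun_plus : PRfun 2 (fun v => arg0 v + arg1 v).
Proof.
  apply (PRfun_rec 1 (fun v => arg0 v) (fun v => S (arg2 v)));
    [apply PRfun_proj | apply PRfun_S, PRfun_proj | ..];
    intros x; destruct_vec x; simpl; lia.
Qed.

Lemma PRfun_add k h1 h2 : PRfun k h1 -> PRfun k h2 -> PRfun k (fun x => h1 x + h2 x).
Proof. apply PRfun_comp2, PRfun_plus. Qed.

Lemma PRfun_minus : PRfun 2 (fun v => arg0 v - arg1 v).
Proof.
  apply (PRfun_rec 1 (fun v => arg0 v) (fun v => Nat.pred (arg2 v)));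
    [apply PRfun_proj | apply PRfun_comp1; [apply PRfun_pred | apply PRfun_proj]
    | intros x; destruct_vec x; apply Nat.sub_0_r
    | intros x y; destruct_vec x; apply Nat.sub_succ_r].
Qed.

Lemma PRfun_sub k h1 h2 : PRfun k h1 -> PRfun k h2 -> PRfun k (fun x => h1 x - h2 x).
Proof. apply PRfun_comp2, PRfun_minus. Qed.

Lemma PRfun_times : PRfun 2 (fun v => arg0 v * arg1 v).
Proof.
  apply (PRfun_rec 1 (fun _ => 0) (fun v => arg2 v + arg0 v));
    [apply PRfun_const | apply PRfun_add; apply PRfun_proj | ..];
    intros x; destruct_vec x; simpl; lia.
Qed.

Lemma PRfun_mul k h1 h2 : PRfun k h1 -> PRfun k h2 -> PRfun k (fun x => h1 x * h2 x).
Proof. apply PRfun_comp2, PRfun_times. Qed.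

Lemma PRfun_leb k h1 h2 :
  PRfun k h1 -> PRfun k h2 -> PRfun k (fun x => Nat.b2n (h1 x <=? h2 x)).
Proof.
  intros H1 H2. replace (fun x => _) with (fun x => 1 - (h1 x - h2 x)).
  - apply PRfun_sub; [apply PRfun_const | apply PRfun_sub; assumption].
  - extensionality x. destruct (Nat.leb_spec (h1 x) (h2 x)); cbn [Nat.b2n]; lia.
Qed.

Lemma PRfun_ltb k h1 h2 :
  PRfun k h1 -> PRfun k h2 -> PRfun k (fun x => Nat.b2n (h1 x <? h2 x)).
Proof. intros H1 H2. exact (PRfun_leb k _ h2 (PRfun_S k h1 H1) H2). Qed.

Lemma PRfun_eqb k h1 h2 :
  PRfun k h1 -> PRfun k h2 -> PRfun k (fun x => Nat.b2n (h1 x =? h2 x)).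
Proof.
  intros H1 H2. replace (fun x => _) with (fun x => 1 - ((h1 x - h2 x) + (h2 x - h1 x))).
  - apply PRfun_sub; [apply PRfun_const | apply PRfun_add; apply PRfun_sub; assumption].
  - extensionality x. destruct (Nat.eqb_spec (h1 x) (h2 x)); cbn [Nat.b2n]; lia.
Qed.

Lemma PRfun_andb k p q :
  PRfun k (fun x => Nat.b2n (p x)) -> PRfun k (fun x => Nat.b2n (q x)) ->
  PRfun k (fun x => Nat.b2n (p x && q x)).
Proof.
  intros Hp Hq. replace (fun x => _) with (fun x => Nat.b2n (p x) * Nat.b2n (q x)).
  - apply PRfun_mul; assumption.
  - extensionality x. destruct (p x), (q x); reflexivity.
Qed.

Lemma PRfun_negb k p : PRfun k (fun x => Nat.b2n (p x)) -> PRfun k (fun x => Nat.b2n (negb (p x))).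
Proof.
  intros Hp. replace (fun x => _) with (fun x => 1 - Nat.b2n (p x)).
  - apply PRfun_sub; [apply PRfun_const | assumption].
  - extensionality x. destruct (p x); reflexivity.
Qed.

End PrimitiveRecursiveFunctions.

Create HintDb prfun.
#[export] Hint Resolve PRfun_proj PRfun_const PRfun_S PRfun_add PRfun_sub PRfun_mul
  PRfun_leb PRfun_ltb PRfun_eqb PRfun_andb PRfun_negb : prfun.

Section CantorPairing.
Local Open Scope nat_scope.

Fixpoint tri (d : nat) : nat :=
  match d with 0 => 0 | S d' => tri d' + S d' end.

(* [unpair n] lies on the diagonal [a + b = diag n], at position [n - tri (diag n)] along it. *)
Fixpoint diag (n : nat) : nat :=
  match n with 0 => 0 | S n' => diag n' + Nat.b2n (S n' =? tri (S (diag n'))) end.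

Definition unpair_snd (n : nat) : nat := n - tri (diag n).
Definition unpair_fst (n : nat) : nat := diag n - unpair_snd n.

Lemma diag_S n : diag (S n) = diag n + Nat.b2n (S n =? tri (diag n) + S (diag n)).
Proof. reflexivity. Qed.

Lemma diag_spec n : tri (diag n) <= n < tri (diag n) + S (diag n).
Proof.
  induction n as [|n IH]; [simpl; lia|]. rewrite diag_S.
  destruct (Nat.eqb_spec (S n) (tri (diag n) + S (diag n))); cbn [Nat.b2n].
  - rewrite Nat.add_1_r. cbn [tri]. lia.
  - rewrite Nat.add_0_r. lia.
Qed.

Lemma unpair_spec n : unpair n = (unpair_fst n, unpair_snd n).
Proof.
  induction n as [|n IH]; [reflexivity|].
  change (unpair (S n)) with (pair_succ (unpair n)). rewrite IH.
  unfold unpair_fst, unpair_snd. pose proof (diag_spec n). rewrite diag_S.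
  destruct (Nat.eqb_spec (S n) (tri (diag n) + S (diag n))); cbn [Nat.b2n].
  - rewrite Nat.add_1_r. cbn [tri].
    replace (diag n - (n - tri (diag n))) with 0 by lia. cbn [pair_succ]. f_equal; lia.
  - rewrite Nat.add_0_r.
    destruct (diag n - (n - tri (diag n))) eqn:Ea; [lia|]. cbn [pair_succ]. f_equal; lia.
Qed.

Lemma PRfun_tri k h : PRfun k h -> PRfun k (fun x => tri (h x)).
Proof.
  apply PRfun_comp1.
  apply (PRfun_rec 0 (fun _ => 0) (fun v => arg1 v + S (arg0 v))); auto with prfun;
    intros x; destruct_vec x; reflexivity.
Qed.
#[local] Hint Resolve PRfun_tri : prfun.

Lemma PRfun_diag k h : PRfun k h -> PRfun k (fun x => diag (h x)).
Proof.
  apply PRfun_comp1.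
  apply (PRfun_rec 0 (fun _ => 0) (fun v => arg1 v + Nat.b2n (S (arg0 v) =? tri (S (arg1 v)))));
    auto 7 with prfun; intros x; destruct_vec x; reflexivity.
Qed.
#[local] Hint Resolve PRfun_diag : prfun.

Lemma PRfun_unpair_snd k h : PRfun k h -> PRfun k (fun x => unpair_snd (h x)).
Proof. unfold unpair_snd. auto with prfun. Qed.

Lemma PRfun_unpair_fst k h : PRfun k h -> PRfun k (fun x => unpair_fst (h x)).
Proof. unfold unpair_fst. auto using PRfun_unpair_snd with prfun. Qed.

End CantorPairing.
#[export] Hint Resolve PRfun_unpair_fst PRfun_unpair_snd : prfun.

Section BinaryDigits.
Local Open Scope nat_scope.

(* Long division of [a] by [b] in base 2: [bin_digit a b i] is the [(i+1)]-th binary digit of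
   [a / b], and [bin_rem a b i] is the remainder left after the first [i] digits. *)
Fixpoint bin_rem (a b i : nat) : nat :=
  match i with
  | 0 => a
  | S i' => 2 * bin_rem a b i' - b * Nat.b2n (b <=? 2 * bin_rem a b i')
  end.

Definition bin_digit (a b i : nat) : nat := Nat.b2n (b <=? 2 * bin_rem a b i).

Lemma PRfun_bin_rem k h1 h2 h3 :
  PRfun k h1 -> PRfun k h2 -> PRfun k h3 -> PRfun k (fun x => bin_rem (h1 x) (h2 x) (h3 x)).
Proof.
  apply PRfun_comp3.
  apply (PRfun_rec 2 (fun v => arg0 v)
           (fun v => 2 * arg3 v - arg1 v * Nat.b2n (arg1 v <=? 2 * arg3 v)));
    auto with prfun; intros x; destruct_vec x; reflexivity.
Qed.

Lemma PRfun_bin_digit k h1 h2 h3 :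
  PRfun k h1 -> PRfun k h2 -> PRfun k h3 -> PRfun k (fun x => bin_digit (h1 x) (h2 x) (h3 x)).
Proof. unfold bin_digit. auto using PRfun_bin_rem with prfun. Qed.

End BinaryDigits.

Lemma sum_half_powers N : sum_f_R0 (fun i => (/2) ^ S i) N = 1 - (/2) ^ S N.
Proof. induction N as [|N IH]; [simpl; field | rewrite tech5, IH; simpl; field]. Qed.

Lemma INR_ratio_nonneg n m : 0 <= INR n / INR m.
Proof.
  destruct m as [|m]; unfold Rdiv.
  - rewrite INR_0, Rinv_0, Rmult_0_r. lra.
  - apply Rmult_le_pos; [apply pos_INR | left; apply Rinv_0_lt_compat, lt_0_INR; lia].
Qed.

Lemma INR_ratio_le_1 n m : (0 < m)%nat -> INR n / INR m <= 1 <-> (n <= m)%nat.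
Proof.
  intro Hm. apply lt_0_INR in Hm. split; intro H.
  - apply INR_le. apply (Rmult_le_compat_r (INR m)) in H; [|lra].
    field_simplify in H; lra.
  - apply le_INR in H. apply (Rmult_le_reg_r (INR m)); [lra|]. field_simplify; lra.
Qed.

Section BinaryExpansion.
Variables a b : nat.
Hypothesis b_pos : (0 < b)%nat.
Hypothesis a_le_b : (a <= b)%nat.

Lemma bin_rem_le i : (bin_rem a b i <= b)%nat.
Proof.
  induction i as [|i IH]; cbn [bin_rem]; [exact a_le_b|].
  destruct (Nat.leb_spec b (2 * bin_rem a b i)); cbn [Nat.b2n]; lia.
Qed.

Lemma INR_bin_rem_S i :
  INR (bin_rem a b (S i)) = 2 * INR (bin_rem a b i) - INR b * INR (bin_digit a b i).
Proof.
  unfold bin_digit. cbn [bin_rem].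
  destruct (Nat.leb_spec b (2 * bin_rem a b i)); cbn [Nat.b2n].
  - rewrite Nat.mul_1_r, minus_INR, mult_INR by lia. simpl. ring.
  - rewrite Nat.mul_0_r, Nat.sub_0_r, mult_INR. simpl. ring.
Qed.

Lemma bin_rem_ratio_bounds i : 0 <= INR (bin_rem a b i) / INR b <= 1.
Proof.
  split; [apply INR_ratio_nonneg | apply INR_ratio_le_1, bin_rem_le; exact b_pos].
Qed.

Lemma sum_bin_digit N :
  sum_f_R0 (fun i => INR (bin_digit a b i) * (/2) ^ S i) N =
  INR a / INR b - INR (bin_rem a b (S N)) / INR b * (/2) ^ S N.
Proof.
  assert (INR b <> 0) by (apply not_0_INR; lia).
  induction N as [|N IH].
  - simpl sum_f_R0. rewrite INR_bin_rem_S. simpl. field. assumption.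
  - rewrite tech5, IH, (INR_bin_rem_S (S N)). simpl pow. field. assumption.
Qed.

Lemma half_power_error (c : R) N : 0 <= c <= 1 -> Rabs (c * (/2) ^ S N) <= Rabs ((/2) ^ N).
Proof.
  intro Hc. assert (0 < (/2) ^ N) by (apply pow_lt; lra).
  simpl pow. rewrite !Rabs_pos_eq by nra. nra.
Qed.

Lemma infinite_sum_bin_digit :
  infinite_sum (fun i => INR (bin_digit a b i) * (/2) ^ S i) (INR a / INR b).
Proof.
  apply (infinite_sum_geometric_error _ _
           (fun N => - (INR (bin_rem a b (S N)) / INR b * (/2) ^ S N)) (/2)).
  - rewrite Rabs_pos_eq; lra.
  - intro N. rewrite sum_bin_digit. ring.
  - intro N. rewrite Rabs_Ropp. apply half_power_error, bin_rem_ratio_bounds.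
Qed.

Lemma infinite_sum_bin_digit_compl :
  infinite_sum (fun i => (1 - INR (bin_digit a b i)) * (/2) ^ S i) (1 - INR a / INR b).
Proof.
  apply (infinite_sum_geometric_error _ _
           (fun N => (1 - INR (bin_rem a b (S N)) / INR b) * - (/2) ^ S N) (/2)).
  - rewrite Rabs_pos_eq; lra.
  - intro N. rewrite <- (sum_eq (fun i => (/2) ^ S i - INR (bin_digit a b i) * (/2) ^ S i))
      by (intros; ring).
    rewrite minus_sum, sum_half_powers, sum_bin_digit. ring.
  - intro N. rewrite Rabs_mult, Rabs_Ropp, <- Rabs_mult.
    pose proof (bin_rem_ratio_bounds (S N)). apply half_power_error. lra.
Qed.

End BinaryExpansion.

(* Count the tails of a fair coin before the first head. *)
Definition geometric_pf (k : nat) : PF k :=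
  mu_pf k (comp_pf 1 (k + 1) rand_pf (fun i => det_pf (k + 1) [fun _ => 0%nat][@i])).

Lemma PR_geometric_pf k : PR k (geometric_pf k).
Proof.
  apply PR_mu, PR_comp; [exact PR_rand|].
  apply (proj1 (Vector.Forall_nth _ (PRfun (k + 1)) _ _)).
  constructor; [apply PRfun_const|]. constructor.
Qed.

Lemma geometric_pf_spec k x Y : geometric_pf k x Y = (/2) ^ S Y.
Proof.
  unfold geometric_pf, mu_pf. rewrite comp_det_pf. simpl.
  assert (Htails : ssum (fun j => rand_pf [0%nat] (S j)) = /2).
  { rewrite (ssum_single _ 0); [unfold rand_pf; simpl; field|].
    intros [|j] Hj; [lia | reflexivity]. }
  rewrite Htails, prodlt_const. unfold rand_pf. simpl. field.
Qed.

Section DigitTest.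
Local Open Scope nat_scope.
Local Open Scope bool_scope.

Definition valid_frac (a b : nat) : bool := (0 <? b) && (a <=? b).

(* For [v = [n; Y; z]] and [unpair n = (a, b)]: zero exactly when [0 <= a/b <= 1] and [z] is
   the [(Y+1)]-th binary digit of [a/b]. *)
Definition digit_test (v : Vector.t nat 3) : nat :=
  Nat.b2n (negb (valid_frac (unpair_fst (arg0 v)) (unpair_snd (arg0 v)) &&
                 (arg2 v =? bin_digit (unpair_fst (arg0 v)) (unpair_snd (arg0 v)) (arg1 v)))).

Lemma PRfun_digit_test : PRfun 3 digit_test.
Proof. unfold digit_test, valid_frac. auto 10 using PRfun_bin_digit with prfun. Qed.

End DigitTest.

Definition binary_digit_pf : PF 2 := mu_pf 2 (det_pf 3 digit_test).

Lemma binary_digit_pf_spec n Y :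
  binary_digit_pf [n; Y] =
  if valid_frac (unpair_fst n) (unpair_snd n)
  then dirac (bin_digit (unpair_fst n) (unpair_snd n) Y)
  else fun _ => 0.
Proof.
  unfold binary_digit_pf. destruct (valid_frac (unpair_fst n) (unpair_snd n)) eqn:Hvalid.
  - apply mu_det_pf_first_zero; unfold digit_test; simpl; rewrite Hvalid.
    + rewrite Nat.eqb_refl. reflexivity.
    + intros z Hz. rewrite (proj2 (Nat.eqb_neq z _)) by lia. discriminate.
  - apply mu_det_pf_no_zero. intro z. unfold digit_test. simpl. rewrite Hvalid. discriminate.
Qed.

Definition i2p_pf : PF 1 :=
  comp_pf 2 1 binary_digit_pf (Vector.nth [proj_pf 1 Fin.F1; geometric_pf 1]).

Lemma PR_i2p_pf : PR 1 i2p_pf.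
Proof.
  apply PR_comp; [apply PR_mu, PRfun_digit_test|].
  apply (proj1 (Vector.Forall_nth _ (PR 1) _ _)).
  constructor; [apply PR_proj|]. constructor; [apply PR_geometric_pf|]. constructor.
Qed.

Lemma i2p_pf_spec n y :
  i2p_pf [n] y =
  if valid_frac (unpair_fst n) (unpair_snd n)
  then ssum (fun Y => dirac (bin_digit (unpair_fst n) (unpair_snd n) Y) y * (/2) ^ S Y)
  else 0.
Proof.
  unfold i2p_pf, comp_pf. simpl. rewrite (ssum_single _ n).
  - change (proj_pf 1 Fin.F1 [n] n) with (dirac n n). rewrite dirac_eq.
    destruct (valid_frac (unpair_fst n) (unpair_snd n)) eqn:Hvalid;
      [f_equal; extensionality Y | apply ssum_0; intro Y];
      rewrite binary_digit_pf_spec, Hvalid, geometric_pf_spec; simpl pow; ring.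
  - intros z Hz. apply ssum_0. intro Y.
    change (proj_pf 1 Fin.F1 [n] z) with (dirac n z). rewrite dirac_neq by exact Hz. ring.
Qed.

Lemma dirac_b2n c y :
  dirac (Nat.b2n c) y = match y with 0 => 1 - INR (Nat.b2n c) | 1 => INR (Nat.b2n c) | _ => 0 end.
Proof. destruct c, y as [|[|y]]; unfold dirac; simpl; ring. Qed.

Lemma i2p_pf_eq_I2P : i2p_pf = I2P.
Proof.
  extensionality v. extensionality y. destruct_vec v. rename a into n. rewrite i2p_pf_spec.
  unfold I2P, onearg. simpl Vector.hd. rewrite unpair_spec.
  set (a := unpair_fst n). set (b := unpair_snd n).
  unfold valid_frac. destruct (Nat.ltb_spec 0 b) as [Hb|Hb]; [|reflexivity].
  pose proof (INR_ratio_nonneg a b) as Hq0. pose proof (INR_ratio_le_1 a b Hb) as Hq1.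
  destruct (Rle_dec 0 _) as [_|]; [|lra]. simpl andb.
  destruct (Nat.leb_spec a b) as [Hab|Hab].
  - destruct (Rle_dec _ 1) as [_|]; [|tauto].
    assert (Hdigit : forall Y, dirac (bin_digit a b Y) y * (/2) ^ S Y =
      match y with
      | 0 => 1 - INR (bin_digit a b Y) | 1 => INR (bin_digit a b Y) | _ => 0
      end * (/2) ^ S Y) by (intro Y; unfold bin_digit; rewrite dirac_b2n; reflexivity).
    rewrite (functional_extensionality _ _ Hdigit).
    destruct y as [|[|y]]; simpl Nat.eqb; cbv iota.
    + apply ssum_unique, infinite_sum_bin_digit_compl; assumption.
    + apply ssum_unique, infinite_sum_bin_digit; assumption.
    + apply ssum_0. intro. ring.
  - destruct (Rle_dec _ 1) as [Hle|]; [apply Hq1 in Hle; lia | reflexivity].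
Qed.

Theorem mainTheorem9 : PR 1 I2P.
Proof. rewrite <- i2p_pf_eq_I2P. exact PR_i2p_pf. Qed.
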